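(* Let $c,d\in P$ with $c<d$. Then $(P;{\rm Low})$ has a primitive positive interpretation in $(P;{\rm Cycl},c,d)$.
   Context: $(P;\leq)$ is the random partial order (Fraïssé limit of all finite partial orders); $x<y$ means $x\leq y\wedge x\ne y$; $x\bot y$ means incomparable; $z\bot xy$ abbreviates $z\bot x\wedge z\bot y$. ${\rm Low}(x,y,z):=(x<y\wedge z\bot xy)\vee(x<z\wedge y\bot xz)$; ${\rm Cycl}(x,y,z):=(x<y\wedge y<z)\vee(y<z\wedge z<x)\vee(z<x\wedge x<y)\vee(x<y\wedge z\bot xy)\vee(y<z\wedge x\bot yz)\vee(z<x\wedge y\bot zx)$. $(P;{\rm Cycl},c,d)$ is the expansion by constants $c,d$. A structure $\Delta$ (domain $D$) has a primitive positive interpretation in $\Gamma$ if there are $n\geq1$ and a surjective partial map $I:P^n\to D$ whose domain, the preimage of equality on $D$, and the preimages of the relations of $\Delta$ are definable in $\Gamma$ by primitive positive formulas ($\exists\bar y$ (conjunction of atomic formulas)). *)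

From Stdlib Require Import List Arith.
Import ListNotations.

Section RandomPoset.
Variable T : Type.
Variable le : T -> T -> Prop.

Definition lt (x y : T) : Prop := le x y /\ x <> y.
Definition incomp (x y : T) : Prop := ~ le x y /\ ~ le y x.

Definition incomp2 (z x y : T) : Prop := incomp z x /\ incomp z y.

Definition Low (x y z : T) : Prop :=
  (lt x y /\ incomp2 z x y) \/ (lt x z /\ incomp2 y x z).

Definition Cycl (x y z : T) : Prop :=
  (lt x y /\ lt y z) \/ (lt y z /\ lt z x) \/ (lt z x /\ lt x y) \/
  (lt x y /\ incomp2 z x y) \/ (lt y z /\ incomp2 x y z) \/
  (lt z x /\ incomp2 y z x).

Definition is_partial_order : Prop :=
  (forall x, le x x) /\
  (forall x y, le x y -> le y x -> x = y) /\
  (forall x y z, le x y -> le y z -> le x z).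

Definition countable : Prop := exists f : nat -> T, forall x, exists i, f i = x.

Definition finite_posets_embed : Prop :=
  forall (n : nat) (R : nat -> nat -> Prop),
    (forall i, i < n -> R i i) ->
    (forall i j, i < n -> j < n -> R i j -> R j i -> i = j) ->
    (forall i j k, i < n -> j < n -> k < n -> R i j -> R j k -> R i k) ->
    exists e : nat -> T,
      (forall i j, i < n -> j < n -> e i = e j -> i = j) /\
      (forall i j, i < n -> j < n -> (R i j <-> le (e i) (e j))).

(** ultrahomogeneity: every isomorphism between finite substructures
    (given as a map f on the finite set of elements of the list s)
    extends to an automorphism. *)
Definition homogeneous : Prop :=
  forall (s : list T) (f : T -> T),
    (forall x y, In x s -> In y s -> f x = f y -> x = y) ->
    (forall x y, In x s -> In y s -> (le x y <-> le (f x) (f y))) ->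
    exists g h : T -> T,
      (forall x, h (g x) = x) /\ (forall x, g (h x) = x) /\
      (forall x y, le x y <-> le (g x) (g y)) /\
      (forall x, In x s -> g x = f x).

(** (T;le) is (isomorphic to) the random partial order: a countable
    homogeneous partial order whose age is the class of all finite posets. *)
Definition random_poset : Prop :=
  is_partial_order /\ countable /\ finite_posets_embed /\ homogeneous.

Variables c d : T.

Inductive term : Type :=
| TVar (i : nat)
| TConstC
| TConstD.

Inductive atom : Type :=
| ACycl (t1 t2 t3 : term)
| AEq (t1 t2 : term).

Definition eval_term (env : list T) (t : term) : option T :=
  match t with
  | TVar i => nth_error env i
  | TConstC => Some c
  | TConstD => Some d
  end.

Definition sat_atom (env : list T) (a : atom) : Prop :=
  match a with
  | ACycl t1 t2 t3 =>
      exists x y z, eval_term env t1 = Some x /\ eval_term env t2 = Some y /\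
                    eval_term env t3 = Some z /\ Cycl x y z
  | AEq t1 t2 =>
      exists x y, eval_term env t1 = Some x /\ eval_term env t2 = Some y /\ x = y
  end.

(** The k-ary relation R (on lists of length k) is defined by the pp-formula
    exists y_0..y_{m-1}. /\ atoms, with free variables x_0..x_{k-1}
    (variable index i < k is x_i, index k + j is y_j). *)
Definition pp_definable (k : nat) (R : list T -> Prop) : Prop :=
  exists (m : nat) (atoms : list atom),
    forall xs, length xs = k ->
      (R xs <-> exists ys, length ys = m /\ Forall (sat_atom (xs ++ ys)) atoms).

(** (T; Low) has a pp-interpretation in (T; Cycl, c, d):
    a partial surjective map I : T^n -> T with pp-definable domain Dom,
    pp-definable preimage of equality and pp-definable preimage of Low. *)
Definition pp_interprets_Low : Prop :=
  exists (n : nat), 1 <= n /\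
  exists (Dom : list T -> Prop) (I : list T -> T),
    pp_definable n Dom /\
    (forall y, exists xs, length xs = n /\ Dom xs /\ I xs = y) /\
    pp_definable (2 * n) (fun zs =>
      Dom (firstn n zs) /\ Dom (skipn n zs) /\
      I (firstn n zs) = I (skipn n zs)) /\
    pp_definable (3 * n) (fun zs =>
      Dom (firstn n zs) /\ Dom (firstn n (skipn n zs)) /\ Dom (skipn (2 * n) zs) /\
      Low (I (firstn n zs)) (I (firstn n (skipn n zs))) (I (skipn (2 * n) zs))).

End RandomPoset.

From Stdlib Require Import List Arith Lia Bool Classical ClassicalEpsilon.
Import ListNotations.

(* The open interval (c, d) of the random partial order P is order-isomorphic
   to P (back and forth: a finite configuration of P is bounded below and above
   by points a, b, and an automorphism moving a, b to c, d moves it into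
   (c, d)); moreover, for c < d the atom Cycl(c, x, d) says exactly
   c < x < d.  So P is interpreted on (c, d), and it remains to pp-define Low
   on (c, d) from Cycl, c and d.  With six auxiliary variables, ten Cycl-atoms
   force y and z to be incomparable, and eleven further atoms force x to lie
   below one of y, z and be incomparable to the other, which is Low(x, y, z).
   Soundness of this formula is a statement about partial orders on eleven
   points, checked by a verified case-splitting refutation procedure;
   completeness holds because two explicit eleven-point partial orders extend
   the two possible configurations of (c, d, x, y, z), and the random partial
   order realises every finite extension of a finite substructure. *)

Section PartialIsomorphisms.
Variables (T : Type) (le : T -> T -> Prop).

Definition partial_iso (L : list (T * T)) : Prop :=
  forall p q, In p L -> In q L ->
    (fst p = fst q <-> snd p = snd q) /\ (le (fst p) (fst q) <-> le (snd p) (snd q)).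

Definition partial_iso_from (A : T -> Prop) (L : list (T * T)) : Prop :=
  partial_iso L /\ forall p, In p L -> A (fst p).

Definition automorphism (g : T -> T) : Prop :=
  exists h, (forall x, h (g x) = x) /\ (forall x, g (h x) = x) /\
            (forall x y, le x y <-> le (g x) (g y)).

Definition swap_pair (p : T * T) : T * T := (snd p, fst p).

Lemma map_swap_pair_involutive L : map swap_pair (map swap_pair L) = L.
Proof.
  rewrite map_map. rewrite <- (map_id L) at 2.
  apply map_ext. intros [x y]. reflexivity.
Qed.

Lemma partial_iso_swap L : partial_iso (map swap_pair L) <-> partial_iso L.
Proof.
  assert (Hswap : forall L, partial_iso L -> partial_iso (map swap_pair L)).
  { intros L' HL p q Hp Hq.
    apply in_map_iff in Hp as (p' & <- & Hp). apply in_map_iff in Hq as (q' & <- & Hq).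
    destruct (HL p' q' Hp Hq) as [E Hle]. simpl. split; symmetry; assumption. }
  split; [|apply Hswap].
  intros HL. rewrite <- (map_swap_pair_involutive L). apply Hswap, HL.
Qed.

Lemma automorphism_le g : automorphism g -> forall x y, le x y <-> le (g x) (g y).
Proof. intros (h & _ & _ & Hle). exact Hle. Qed.

Lemma automorphism_inj g : automorphism g -> forall x y, g x = g y -> x = y.
Proof. intros (h & Hhg & _) x y E. rewrite <- (Hhg x), <- (Hhg y), E. reflexivity. Qed.

Lemma automorphism_lt g x y : automorphism g -> lt T le x y -> lt T le (g x) (g y).
Proof.
  intros Hg [Hxy Hne]. split.
  - apply (automorphism_le g Hg x y), Hxy.
  - intros E. apply Hne, (automorphism_inj g Hg), E.
Qed.

End PartialIsomorphisms.

Arguments swap_pair {T} p.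

Section BackAndForth.
Variables (T : Type) (le : T -> T -> Prop) (A : T -> Prop) (enum : nat -> T).
Hypothesis enum_onto : forall x, exists i, enum i = x.
Hypothesis forth : forall L u, partial_iso_from T le A L -> A u ->
  exists v, partial_iso T le ((u, v) :: L).
Hypothesis back : forall L v, partial_iso_from T le A L ->
  exists u, A u /\ partial_iso T le ((u, v) :: L).

Definition extend_forth (L : list (T * T)) (u : T) : list (T * T) :=
  if excluded_middle_informative (A u)
  then (u, epsilon (inhabits u) (fun v => partial_iso T le ((u, v) :: L))) :: L
  else L.

Definition extend_back (L : list (T * T)) (v : T) : list (T * T) :=
  (epsilon (inhabits v) (fun u => A u /\ partial_iso T le ((u, v) :: L)), v) :: L.

Lemma extend_forth_spec L u : partial_iso_from T le A L ->
  partial_iso_from T le A (extend_forth L u) /\ incl L (extend_forth L u) /\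
  (A u -> exists v, In (u, v) (extend_forth L u)).
Proof.
  intros [HL Hdom]. unfold extend_forth.
  destruct (excluded_middle_informative (A u)) as [Hu|Hu].
  - pose proof (epsilon_spec (inhabits u) (fun v => partial_iso T le ((u, v) :: L))
                  (forth L u (conj HL Hdom) Hu)) as Hv.
    split; [split; [exact Hv|]|split].
    + intros p [<-|Hp]; [exact Hu|apply Hdom, Hp].
    + intros p Hp. right. exact Hp.
    + intros _. eexists. left. reflexivity.
  - split; [split; assumption|split; [apply incl_refl|contradiction]].
Qed.

Lemma extend_back_spec L v : partial_iso_from T le A L ->
  partial_iso_from T le A (extend_back L v) /\ incl L (extend_back L v) /\
  exists u, In (u, v) (extend_back L v).
Proof.
  intros [HL Hdom].
  pose proof (epsilon_spec (inhabits v) (fun u => A u /\ partial_iso T le ((u, v) :: L))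
                (back L v (conj HL Hdom))) as [Hu Hv].
  split; [split; [exact Hv|]|split].
  - intros p [<-|Hp]; [exact Hu|apply Hdom, Hp].
  - intros p Hp. right. exact Hp.
  - eexists. left. reflexivity.
Qed.

Fixpoint stage (k : nat) : list (T * T) :=
  match k with
  | 0 => []
  | S k' => extend_back (extend_forth (stage k') (enum k')) (enum k')
  end.

Lemma stage_partial_iso k : partial_iso_from T le A (stage k).
Proof.
  induction k as [|k IH]; simpl.
  - split; [intros p q []|intros p []].
  - apply extend_back_spec, extend_forth_spec, IH.
Qed.

Lemma stage_mono k m : k <= m -> incl (stage k) (stage m).
Proof.
  induction 1 as [|m _ IH]; [apply incl_refl|].
  apply incl_tran with (stage m); [exact IH|]. simpl.
  pose proof (extend_forth_spec (stage m) (enum m) (stage_partial_iso m)) as (Hf & Hincl & _).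
  apply incl_tran with (extend_forth (stage m) (enum m)); [exact Hincl|].
  apply extend_back_spec, Hf.
Qed.

Lemma stage_dom u : A u -> exists k v, In (u, v) (stage k).
Proof.
  intros Hu. destruct (enum_onto u) as [i <-]. exists (S i). simpl.
  pose proof (extend_forth_spec (stage i) (enum i) (stage_partial_iso i)) as (Hf & _ & Hcover).
  destruct (Hcover Hu) as [v Hv]. exists v. apply (extend_back_spec _ (enum i) Hf), Hv.
Qed.

Lemma stage_ran v : exists k u, In (u, v) (stage k).
Proof.
  destruct (enum_onto v) as [i <-]. exists (S i). simpl.
  apply extend_back_spec, extend_forth_spec, stage_partial_iso.
Qed.

Lemma stage_pairs p q k1 k2 : In p (stage k1) -> In q (stage k2) ->
  (fst p = fst q <-> snd p = snd q) /\ (le (fst p) (fst q) <-> le (snd p) (snd q)).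
Proof.
  intros Hp Hq. apply (proj1 (stage_partial_iso (max k1 k2)));
    [apply (stage_mono k1)|apply (stage_mono k2)]; (lia || assumption).
Qed.

Definition limit_map (x : T) : T :=
  epsilon (inhabits x) (fun v => exists k, In (x, v) (stage k)).

Lemma limit_map_graph x : A x -> exists k, In (x, limit_map x) (stage k).
Proof.
  intros Hx. destruct (stage_dom x Hx) as (k & v & Hv).
  apply (epsilon_spec _ (fun v => exists k, In (x, v) (stage k))). eauto.
Qed.

Theorem back_and_forth : exists f : T -> T,
  (forall x y, A x -> A y -> (x = y <-> f x = f y) /\ (le x y <-> le (f x) (f y))) /\
  (forall y, exists x, A x /\ f x = y).
Proof.
  exists limit_map. split.
  - intros x y Hx Hy.
    destruct (limit_map_graph x Hx) as [k1 H1]. destruct (limit_map_graph y Hy) as [k2 H2].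
    exact (stage_pairs _ _ k1 k2 H1 H2).
  - intros y. destruct (stage_ran y) as (k & u & Hu).
    assert (HA : A u) by exact (proj2 (stage_partial_iso k) _ Hu).
    exists u. split; [exact HA|].
    destruct (limit_map_graph u HA) as [k' Hk'].
    apply (stage_pairs _ _ k' k Hk' Hu). reflexivity.
Qed.

End BackAndForth.

Section PartialOrder.
Variables (T : Type) (le : T -> T -> Prop).
Definition in_interval (c d x : T) : Prop := lt T le c x /\ lt T le x d.

Hypothesis Hpo : is_partial_order T le.

Lemma le_refl x : le x x.
Proof. apply Hpo. Qed.

Lemma le_antisym x y : le x y -> le y x -> x = y.
Proof. apply Hpo. Qed.

Lemma le_trans x y z : le x y -> le y z -> le x z.
Proof. apply Hpo. Qed.

Lemma lt_not_ge x y : lt T le x y -> ~ le y x.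
Proof. intros [Hxy Hne] Hyx. apply Hne, le_antisym; assumption. Qed.

Lemma lt_trans x y z : lt T le x y -> lt T le y z -> lt T le x z.
Proof.
  intros [Hxy Hne] Hyz. split.
  - apply le_trans with y; [exact Hxy|apply Hyz].
  - intros <-. exact (lt_not_ge y x Hyz Hxy).
Qed.

Lemma Cycl_between c d x : lt T le c d -> (Cycl T le c x d <-> in_interval c d x).
Proof.
  intros Hcd. pose proof (lt_not_ge c d Hcd) as Hdc.
  split; [|intros Hx; left; exact Hx].
  unfold Cycl, in_interval, incomp2, incomp, lt in *. tauto.
Qed.

Definition same_position (u v x y : T) : Prop :=
  (u = x <-> v = y) /\ (le u x <-> le v y) /\ (le x u <-> le y v).

Lemma same_position_below u v x y :
  lt T le u x -> lt T le v y -> same_position u v x y.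
Proof.
  intros Hux Hvy. pose proof (lt_not_ge u x Hux). pose proof (lt_not_ge v y Hvy).
  destruct Hux, Hvy. unfold same_position. tauto.
Qed.

Lemma same_position_above u v x y :
  lt T le x u -> lt T le y v -> same_position u v x y.
Proof.
  intros Hxu Hyv.
  destruct (same_position_below x y u v Hxu Hyv) as (E & Hle1 & Hle2).
  split; [|tauto]. split; intros ->; symmetry; apply E; reflexivity.
Qed.

Lemma partial_iso_cons u v L : partial_iso T le L ->
  (forall q, In q L -> same_position u v (fst q) (snd q)) ->
  partial_iso T le ((u, v) :: L).
Proof.
  intros HL Hsame p q [<-|Hp] [<-|Hq]; simpl.
  - split; [tauto|split; intros; apply le_refl].
  - destruct (Hsame q Hq) as (E & Hle & _). split; assumption.
  - destruct (Hsame p Hp) as (E & _ & Hle). split; [|assumption].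
    split; intros E'; symmetry; apply E; symmetry; exact E'.
  - apply HL; assumption.
Qed.

Lemma partial_iso_cons_automorphism g L u : automorphism T le g ->
  (forall p, In p L -> g (fst p) = snd p) -> partial_iso T le L ->
  partial_iso T le ((u, g u) :: L).
Proof.
  intros Hg Hgraph HL. apply partial_iso_cons; [exact HL|].
  intros q Hq. rewrite <- (Hgraph q Hq). unfold same_position.
  rewrite <- !(automorphism_le T le g Hg).
  split; [|tauto]. split; [intros ->; reflexivity|apply (automorphism_inj T le g Hg)].
Qed.

Lemma Low_transfer (P : T -> Prop) (f : T -> T) x y z :
  (forall a b, P a -> P b -> (a = b <-> f a = f b) /\ (le a b <-> le (f a) (f b))) ->
  P x -> P y -> P z -> (Low T le x y z <-> Low T le (f x) (f y) (f z)).
Proof.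
  intros Hf Hx Hy Hz.
  destruct (Hf x y Hx Hy) as [E1 L1]. destruct (Hf y x Hy Hx) as [E2 L2].
  destruct (Hf x z Hx Hz) as [E3 L3]. destruct (Hf z x Hz Hx) as [E4 L4].
  destruct (Hf y z Hy Hz) as [E5 L5]. destruct (Hf z y Hz Hy) as [E6 L6].
  unfold Low, incomp2, incomp, lt. tauto.
Qed.

End PartialOrder.


Inductive fact : Type :=
| FLe (i j : nat)
| FNle (i j : nat)
| FNeq (i j : nat).

Definition lt_facts (i j : nat) : list fact := [FLe i j; FNeq i j].
Definition incomp_facts (i j : nat) : list fact := [FNle i j; FNle j i].

Definition cycl_cases (i j k : nat) : list (list fact) :=
  [lt_facts i j ++ lt_facts j k; lt_facts j k ++ lt_facts k i; lt_facts k i ++ lt_facts i j;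
   lt_facts i j ++ incomp_facts k i ++ incomp_facts k j;
   lt_facts j k ++ incomp_facts i j ++ incomp_facts i k;
   lt_facts k i ++ incomp_facts j k ++ incomp_facts j i].

Definition le_edges (fs : list fact) : list (nat * nat) :=
  flat_map (fun f => match f with FLe i j => [(i, j)] | _ => [] end) fs.

Definition memb (x : nat) (l : list nat) : bool := existsb (Nat.eqb x) l.

Definition successors (E : list (nat * nat)) (vs : list nat) : list nat :=
  fold_right (fun e acc =>
    if memb (fst e) vs && negb (memb (snd e) acc) then snd e :: acc else acc) vs E.

(* Any fuel gives a sound answer; [length E] rounds reach every successor. *)
Fixpoint reachable_from (fuel : nat) (E : list (nat * nat)) (vs : list nat) : list nat :=
  match fuel with
  | 0 => vs
  | S fuel' =>
      let vs' := successors E vs in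
      if length vs' =? length vs then vs else reachable_from fuel' E vs'
  end.

Definition reaches (E : list (nat * nat)) (i j : nat) : bool :=
  memb j (reachable_from (length E) E [i]).

Definition inconsistent (fs : list fact) : bool :=
  let E := le_edges fs in
  existsb (fun f => match f with
                    | FLe _ _ => false
                    | FNle i j => reaches E i j
                    | FNeq i j => reaches E i j && reaches E j i
                    end) fs.

(* Written with [if] rather than [||] so that [vm_compute], which evaluates
   arguments eagerly, prunes the search at inconsistent nodes. *)
Fixpoint refutes (atoms : list (nat * nat * nat)) (fs : list fact) : bool :=
  if inconsistent fs then true else
  match atoms with
  | [] => false
  | (i, j, k) :: atoms' => forallb (fun cs => refutes atoms' (cs ++ fs)) (cycl_cases i j k)
  end.

Definition rel_of (R : list (nat * nat)) (i j : nat) : bool :=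
  (i =? j) || existsb (fun p => (fst p =? i) && (snd p =? j)) R.

Definition is_poset (n : nat) (R : list (nat * nat)) : bool :=
  forallb (fun i => forallb (fun j =>
    (negb (rel_of R i j && rel_of R j i) || (i =? j)) &&
    forallb (fun k => negb (rel_of R i j && rel_of R j k) || rel_of R i k) (seq 0 n))
    (seq 0 n)) (seq 0 n).

Definition holdsb (n : nat) (R : list (nat * nat)) (f : fact) : bool :=
  match f with
  | FLe i j => (i <? n) && (j <? n) && rel_of R i j
  | FNle i j => (i <? n) && (j <? n) && negb (rel_of R i j)
  | FNeq i j => (i <? n) && (j <? n) && negb (i =? j)
  end.

Definition indices_below (n : nat) (t : nat * nat * nat) : Prop :=
  let '(i, j, k) := t in i < n /\ j < n /\ k < n.

Definition satisfies (n : nat) (R : list (nat * nat)) (atoms : list (nat * nat * nat)) : bool :=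
  forallb (fun t => let '(i, j, k) := t in
    (i <? n) && (j <? n) && (k <? n) && existsb (forallb (holdsb n R)) (cycl_cases i j k)) atoms.

Definition determines (m : nat) (R : list (nat * nat)) (fs : list fact) : bool :=
  forallb (fun i => forallb (fun j =>
    (if rel_of R i j then reaches (le_edges fs) i j else inconsistent (FLe i j :: fs)) &&
    ((i =? j) || inconsistent (FLe i j :: FLe j i :: fs))) (seq 0 m)) (seq 0 m).

Lemma in_seq_0 n i : i < n -> In i (seq 0 n).
Proof. intros Hi. apply in_seq. lia. Qed.

Lemma is_poset_sound n R : is_poset n R = true ->
  (forall i j, i < n -> j < n -> rel_of R i j = true -> rel_of R j i = true -> i = j) /\
  (forall i j k, i < n -> j < n -> k < n ->
     rel_of R i j = true -> rel_of R j k = true -> rel_of R i k = true).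
Proof.
  unfold is_poset. rewrite forallb_forall. intros Hpos.
  assert (Hij : forall i j, i < n -> j < n ->
    (negb (rel_of R i j && rel_of R j i) || (i =? j)) &&
    forallb (fun k => negb (rel_of R i j && rel_of R j k) || rel_of R i k) (seq 0 n) = true).
  { intros i j Hi Hj. exact (proj1 (forallb_forall _ _) (Hpos i (in_seq_0 n i Hi)) j (in_seq_0 n j Hj)). }
  split.
  - intros i j Hi Hj H1 H2. pose proof (Hij i j Hi Hj) as H.
    rewrite H1, H2 in H. apply andb_true_iff in H as [H _]. apply Nat.eqb_eq, H.
  - intros i j k Hi Hj Hk H1 H2.
    pose proof (Hij i j Hi Hj) as H. apply andb_true_iff in H as [_ H].
    rewrite forallb_forall in H. specialize (H k (in_seq_0 n k Hk)).
    rewrite H1, H2 in H. exact H.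
Qed.

Lemma rel_of_refl R i : rel_of R i i = true.
Proof. unfold rel_of. rewrite Nat.eqb_refl. reflexivity. Qed.

Lemma satisfies_indices_below n R atoms : satisfies n R atoms = true ->
  Forall (indices_below n) atoms.
Proof.
  unfold satisfies. rewrite forallb_forall, Forall_forall.
  intros Hsat [[i j] k] Ht. specialize (Hsat _ Ht).
  apply andb_true_iff in Hsat as [Hsat _]. rewrite !andb_true_iff, !Nat.ltb_lt in Hsat.
  simpl. tauto.
Qed.

Section FactSemantics.
Variables (T : Type) (le : T -> T -> Prop).

Definition cycl_atom (env : nat -> T) (t : nat * nat * nat) : Prop :=
  let '(i, j, k) := t in Cycl T le (env i) (env j) (env k).

Variable env : nat -> T.

Definition holds (f : fact) : Prop :=
  match f with
  | FLe i j => le (env i) (env j)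
  | FNle i j => ~ le (env i) (env j)
  | FNeq i j => env i <> env j
  end.

Lemma lt_facts_hold i j : lt T le (env i) (env j) -> Forall holds (lt_facts i j).
Proof. intros [Hle Hne]. repeat constructor; assumption. Qed.

Lemma incomp_facts_hold i j : incomp T le (env i) (env j) -> Forall holds (incomp_facts i j).
Proof. intros [H1 H2]. repeat constructor; assumption. Qed.

Lemma Cycl_iff_cases i j k : cycl_atom env (i, j, k) <->
  exists cs, In cs (cycl_cases i j k) /\ Forall holds cs.
Proof.
  unfold cycl_atom, Cycl, incomp2, lt, incomp. split.
  - intros [C|[C|[C|[C|[C|C]]]]];
      [exists (lt_facts i j ++ lt_facts j k) | exists (lt_facts j k ++ lt_facts k i)
      |exists (lt_facts k i ++ lt_facts i j) | exists (lt_facts i j ++ incomp_facts k i ++ incomp_facts k j)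
      |exists (lt_facts j k ++ incomp_facts i j ++ incomp_facts i k)
      |exists (lt_facts k i ++ incomp_facts j k ++ incomp_facts j i)];
      (split; [simpl; tauto|]); simpl; repeat constructor; simpl; tauto.
  - intros (cs & Hcs & Hall). unfold cycl_cases, lt_facts, incomp_facts in Hcs. simpl in Hcs.
    repeat destruct Hcs as [<-|Hcs]; try contradiction;
      repeat rewrite Forall_cons_iff in Hall; simpl in Hall; tauto.
Qed.

Lemma cycl_atoms_ext n (e : nat -> T) atoms :
  (forall i, i < n -> e i = env i) -> Forall (indices_below n) atoms ->
  Forall (cycl_atom e) atoms -> Forall (cycl_atom env) atoms.
Proof.
  intros Heq Hbelow Hatoms. rewrite Forall_forall in *.
  intros [[i j] k] Ht. destruct (Hbelow _ Ht) as (Hi & Hj & Hk).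
  specialize (Hatoms _ Ht). simpl in *. rewrite <- !Heq by assumption. exact Hatoms.
Qed.

Hypothesis Hpo : is_partial_order T le.

Lemma successors_sound E vs i :
  (forall e, In e E -> le (env (fst e)) (env (snd e))) ->
  (forall y, In y vs -> le (env i) (env y)) ->
  forall y, In y (successors E vs) -> le (env i) (env y).
Proof.
  intros HE HS. unfold successors.
  induction E as [|e E IHE]; simpl; [exact HS|].
  specialize (IHE (fun e' He' => HE e' (or_intror He'))).
  destruct (memb (fst e) vs && negb _) eqn:Hnew; [|exact IHE].
  intros y [<-|Hy]; [|exact (IHE y Hy)].
  apply andb_true_iff in Hnew as [Hfst _].
  apply existsb_exists in Hfst as (x & Hx & Ex). apply Nat.eqb_eq in Ex. subst x.
  apply (le_trans T le Hpo) with (env (fst e)); [exact (HS _ Hx)|exact (HE e (or_introl eq_refl))].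
Qed.

Lemma reachable_from_sound fuel E vs i :
  (forall e, In e E -> le (env (fst e)) (env (snd e))) ->
  (forall y, In y vs -> le (env i) (env y)) ->
  forall y, In y (reachable_from fuel E vs) -> le (env i) (env y).
Proof.
  intros HE. revert vs. induction fuel as [|fuel IH]; simpl; intros vs HS; [exact HS|].
  destruct (_ =? _); [exact HS|].
  apply IH, successors_sound; assumption.
Qed.

Lemma le_edges_sound fs : Forall holds fs ->
  forall e, In e (le_edges fs) -> le (env (fst e)) (env (snd e)).
Proof.
  rewrite Forall_forall. intros Hfs e He.
  apply in_flat_map in He as (f & Hf & He).
  specialize (Hfs f Hf). destruct f; simpl in He; try contradiction.
  destruct He as [<-|[]]. exact Hfs.
Qed.

Lemma reaches_sound fs i j : Forall holds fs ->
  reaches (le_edges fs) i j = true -> le (env i) (env j).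
Proof.
  intros Hfs Hr. apply existsb_exists in Hr as (y & Hy & Ey). apply Nat.eqb_eq in Ey. subst y.
  apply (reachable_from_sound (length (le_edges fs)) _ [i] i (le_edges_sound fs Hfs)); [|exact Hy].
  intros y [<-|[]]. apply (le_refl T le Hpo).
Qed.

Lemma inconsistent_sound fs : inconsistent fs = true -> ~ Forall holds fs.
Proof.
  intros Hinc Hfs. apply existsb_exists in Hinc as (f & Hf & Hcontra).
  pose proof (proj1 (Forall_forall _ _) Hfs f Hf) as Hholds.
  destruct f as [i j|i j|i j]; simpl in Hcontra, Hholds.
  - discriminate.
  - exact (Hholds (reaches_sound fs i j Hfs Hcontra)).
  - apply andb_true_iff in Hcontra as [Hij Hji].
    apply Hholds, (le_antisym T le Hpo); apply reaches_sound with fs; assumption.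
Qed.

Lemma refutes_sound atoms fs : refutes atoms fs = true -> Forall holds fs ->
  ~ Forall (cycl_atom env) atoms.
Proof.
  revert fs. induction atoms as [|[[i j] k] atoms IH]; intros fs Hr Hfs Hatoms; cbn [refutes] in Hr;
    (destruct (inconsistent fs) eqn:Hinc; [exact (inconsistent_sound fs Hinc Hfs)|]).
  - discriminate.
  - apply Forall_cons_iff in Hatoms as [Hijk Hatoms].
    apply Cycl_iff_cases in Hijk as (cs & Hcs & Hholds).
    apply (IH (cs ++ fs)); [|apply Forall_app; split|]; try assumption.
    apply (proj1 (forallb_forall _ _) Hr cs Hcs).
Qed.

Section Embedding.
Variables (n : nat) (R : list (nat * nat)).
Hypothesis env_le : forall i j, i < n -> j < n -> (rel_of R i j = true <-> le (env i) (env j)).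
Hypothesis env_inj : forall i j, i < n -> j < n -> env i = env j -> i = j.

Lemma holdsb_sound f : holdsb n R f = true -> holds f.
Proof.
  destruct f as [i j|i j|i j]; simpl; rewrite !andb_true_iff, !Nat.ltb_lt;
    intros ((Hi & Hj) & H).
  - apply env_le; assumption.
  - rewrite <- env_le by assumption. apply negb_true_iff in H. rewrite H. discriminate.
  - intros E. apply env_inj in E; [|assumption..]. subst. rewrite Nat.eqb_refl in H. discriminate.
Qed.

Lemma satisfies_sound atoms : satisfies n R atoms = true -> Forall (cycl_atom env) atoms.
Proof.
  unfold satisfies. rewrite forallb_forall, Forall_forall.
  intros Hsat [[i j] k] Ht. specialize (Hsat _ Ht).
  apply andb_true_iff in Hsat as [_ Hcases].
  apply existsb_exists in Hcases as (cs & Hcs & Hall).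
  apply Cycl_iff_cases. exists cs. split; [exact Hcs|].
  apply Forall_forall. intros f Hf. apply holdsb_sound, (proj1 (forallb_forall _ _) Hall f Hf).
Qed.

End Embedding.

Lemma determines_sound m R fs : determines m R fs = true -> Forall holds fs ->
  (forall i j, i < m -> j < m -> (rel_of R i j = true <-> le (env i) (env j))) /\
  (forall i j, i < m -> j < m -> env i = env j -> i = j).
Proof.
  intros Hdet Hfs.
  assert (Hij : forall i j, i < m -> j < m ->
    (if rel_of R i j then reaches (le_edges fs) i j else inconsistent (FLe i j :: fs)) = true /\
    ((i =? j) || inconsistent (FLe i j :: FLe j i :: fs)) = true).
  { intros i j Hi Hj. apply andb_true_iff.
    exact (proj1 (forallb_forall _ _)
             (proj1 (forallb_forall _ _) Hdet i (in_seq_0 m i Hi)) j (in_seq_0 m j Hj)). }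
  split.
  - intros i j Hi Hj. destruct (Hij i j Hi Hj) as [Hrel _].
    destruct (rel_of R i j); split; intros H; try reflexivity.
    + exact (reaches_sound fs i j Hfs Hrel).
    + discriminate.
    + exfalso. apply (inconsistent_sound _ Hrel). constructor; assumption.
  - intros i j Hi Hj E. destruct (Hij i j Hi Hj) as [_ Hneq].
    apply orb_true_iff in Hneq as [Hneq|Hneq]; [apply Nat.eqb_eq, Hneq|].
    exfalso. apply (inconsistent_sound _ Hneq).
    assert (Hle : le (env i) (env j)) by (rewrite E; apply (le_refl T le Hpo)).
    assert (Hge : le (env j) (env i)) by (rewrite E; apply (le_refl T le Hpo)).
    repeat apply Forall_cons; assumption.
Qed.

End FactSemantics.

Section RandomPoset.
Variables (T : Type) (le : T -> T -> Prop).
Hypothesis HP : random_poset T le.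

Let Hpo : is_partial_order T le := proj1 HP.

Lemma partial_iso_extends L : partial_iso T le L ->
  exists g, automorphism T le g /\ forall p, In p L -> g (fst p) = snd p.
Proof.
  intros HL.
  set (f := fun x => epsilon (inhabits x) (fun y => In (x, y) L)).
  assert (Hf : forall p, In p L -> f (fst p) = snd p).
  { intros p Hp.
    assert (Hin : In (fst p, f (fst p)) L).
    { apply (epsilon_spec _ (fun y => In (fst p, y) L)).
      exists (snd p). destruct p. exact Hp. }
    destruct (HL _ _ Hin Hp) as [[E _] _]. apply E. reflexivity. }
  pose proof HP as (_ & _ & _ & Hhom).
  destruct (Hhom (map fst L) f) as (g & h & Hhg & Hgh & Hle & Hgf).
  - intros x y Hx Hy E.
    apply in_map_iff in Hx as (p & <- & Hp). apply in_map_iff in Hy as (q & <- & Hq).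
    rewrite (Hf p Hp), (Hf q Hq) in E. apply (HL p q Hp Hq), E.
  - intros x y Hx Hy.
    apply in_map_iff in Hx as (p & <- & Hp). apply in_map_iff in Hy as (q & <- & Hq).
    rewrite (Hf p Hp), (Hf q Hq). apply (HL p q Hp Hq).
  - exists g. split; [exists h; auto|].
    intros p Hp. rewrite Hgf by (apply in_map, Hp). apply Hf, Hp.
Qed.

Lemma finite_poset_extends n m (R : nat -> nat -> Prop) (s : nat -> T) :
  m <= n ->
  (forall i, i < n -> R i i) ->
  (forall i j, i < n -> j < n -> R i j -> R j i -> i = j) ->
  (forall i j k, i < n -> j < n -> k < n -> R i j -> R j k -> R i k) ->
  (forall i j, i < m -> j < m -> (R i j <-> le (s i) (s j))) ->
  (forall i j, i < m -> j < m -> s i = s j -> i = j) ->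
  exists g : nat -> T,
    (forall i, i < m -> g i = s i) /\
    (forall i j, i < n -> j < n -> (R i j <-> le (g i) (g j))) /\
    (forall i j, i < n -> j < n -> g i = g j -> i = j).
Proof.
  intros Hmn Hrefl Hanti Htrans Hs_le Hs_inj.
  pose proof HP as (_ & _ & Hemb & _).
  destruct (Hemb n R Hrefl Hanti Htrans) as (e & He_inj & He_le).
  set (L := map (fun i => (e i, s i)) (seq 0 m)).
  assert (HL : partial_iso T le L).
  { intros p q Hp Hq.
    apply in_map_iff in Hp as (i & <- & Hi). apply in_map_iff in Hq as (j & <- & Hj).
    apply in_seq in Hi, Hj. simpl. split.
    - split; intros E; [apply He_inj in E|apply Hs_inj in E]; try lia; subst; reflexivity.
    - rewrite <- He_le, <- Hs_le by lia. reflexivity. }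
  destruct (partial_iso_extends L HL) as (g & Hg & Hgraph).
  exists (fun i => g (e i)). split; [|split].
  - intros i Hi. apply (Hgraph (e i, s i)), in_map_iff.
    exists i. split; [reflexivity|apply in_seq; lia].
  - intros i j Hi Hj. rewrite He_le by assumption. apply automorphism_le, Hg.
  - intros i j Hi Hj E. apply He_inj; try assumption. apply (automorphism_inj T le g Hg), E.
Qed.

Lemma finite_set_bounded (x0 : T) (l : list T) :
  exists a b, forall x, In x (x0 :: l) -> lt T le a x /\ lt T le x b.
Proof.
  set (s := nodup (fun x y => excluded_middle_informative (x = y)) (x0 :: l)).
  set (m := length s).
  assert (Hs_inj : forall i j, i < m -> j < m -> nth i s x0 = nth j s x0 -> i = j)
    by (apply NoDup_nth, NoDup_nodup).
  (* m is a new bottom element and S m a new top element *)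
  set (R := fun i j => i = m \/ j = S m \/ (i < m /\ j < m /\ le (nth i s x0) (nth j s x0))).
  destruct (finite_poset_extends (S (S m)) m R (fun i => nth i s x0))
    as (g & Hg_s & Hg_le & Hg_inj).
  - lia.
  - intros i Hi. unfold R.
    destruct (Nat.lt_ge_cases i m) as [Him|Him].
    + right; right. repeat split; [assumption|assumption|apply (le_refl T le Hpo)].
    + destruct (Nat.eq_dec i m); [left|right; left]; lia.
  - intros i j Hi Hj [Hij|[Hij|Hij]] [Hji|[Hji|Hji]]; try lia.
    apply Hs_inj; try lia. apply (le_antisym T le Hpo); [apply Hij|apply Hji].
  - intros i j k Hi Hj Hk Hij Hjk. unfold R in *.
    destruct (Nat.eq_dec i m); [left; assumption|].
    destruct (Nat.eq_dec k (S m)); [right; left; assumption|].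
    right; right.
    destruct Hij as [|[|(Hi' & Hj' & Hij)]]; [lia|lia|].
    destruct Hjk as [|[|(_ & Hk' & Hjk)]]; [lia|lia|].
    split; [|split]; [assumption|assumption|].
    apply (le_trans T le Hpo) with (nth j s x0); assumption.
  - intros i j Hi Hj. unfold R. split; [|auto].
    intros [|[|(_ & _ & Hij)]]; [lia|lia|exact Hij].
  - exact Hs_inj.
  - exists (g m), (g (S m)). intros x Hx.
    apply (nodup_In (fun x y => excluded_middle_informative (x = y))) in Hx.
    destruct (In_nth s x x0 Hx) as (i & Hi & <-).
    rewrite <- (Hg_s i Hi).
    split; split.
    + apply Hg_le; [lia|lia|]. left. reflexivity.
    + intros E. apply Hg_inj in E; lia.
    + apply Hg_le; [lia|lia|]. right; left. reflexivity.
    + intros E. apply Hg_inj in E; lia.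
Qed.

Lemma partial_iso_forth L u : partial_iso T le L ->
  exists v, partial_iso T le ((u, v) :: L).
Proof.
  intros HL. destruct (partial_iso_extends L HL) as (g & Hg & Hgraph).
  exists (g u). apply (partial_iso_cons_automorphism T le Hpo); assumption.
Qed.

Lemma interval_back c d L v : lt T le c d ->
  partial_iso_from T le (in_interval T le c d) L ->
  exists u, in_interval T le c d u /\ partial_iso T le ((u, v) :: L).
Proof.
  intros Hcd [HL Hdom].
  destruct (finite_set_bounded v (map snd L)) as (a & b & Hab).
  assert (Hv := Hab v (or_introl eq_refl)).
  assert (Hran : forall q, In q (map swap_pair L) ->
            lt T le a (fst q) /\ lt T le (fst q) b /\ in_interval T le c d (snd q)).
  { intros q Hq. apply in_map_iff in Hq as (p & <- & Hp). simpl.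
    split; [|split]; [apply Hab; right; apply in_map, Hp..|apply Hdom, Hp]. }
  (* An automorphism sending a, b to c, d and the range of L back to its domain
     moves v into (c, d). *)
  set (M := (a, c) :: (b, d) :: map swap_pair L).
  assert (HM : partial_iso T le M).
  { apply (partial_iso_cons T le Hpo); [apply (partial_iso_cons T le Hpo); [apply partial_iso_swap, HL|]|].
    - intros q Hq. destruct (Hran q Hq) as (_ & Hqb & _ & Hqd).
      apply (same_position_above T le Hpo); assumption.
    - intros q [<-|Hq]; simpl.
      + apply (same_position_below T le Hpo); [apply (lt_trans T le Hpo) with v; apply Hv|exact Hcd].
      + destruct (Hran q Hq) as (Haq & _ & Hcq & _). apply (same_position_below T le Hpo); assumption. }
  destruct (partial_iso_extends M HM) as (h & Hh & Hgraph).
  exists (h v). split.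
  - assert (Ha : h a = c) by (apply (Hgraph (a, c)); left; reflexivity).
    assert (Hb : h b = d) by (apply (Hgraph (b, d)); right; left; reflexivity).
    rewrite <- Ha, <- Hb. split; apply automorphism_lt; solve [apply Hh | apply Hv].
  - apply partial_iso_swap. apply (partial_iso_cons_automorphism T le Hpo); [exact Hh| |].
    + intros p Hp. apply Hgraph. right; right. exact Hp.
    + apply partial_iso_swap, HL.
Qed.

Theorem interval_iso c d : lt T le c d -> exists f : T -> T,
  (forall x y, in_interval T le c d x -> in_interval T le c d y ->
     (x = y <-> f x = f y) /\ (le x y <-> le (f x) (f y))) /\
  (forall y, exists x, in_interval T le c d x /\ f x = y).
Proof.
  intros Hcd. pose proof HP as (_ & [enum enum_onto] & _).
  apply (back_and_forth T le (in_interval T le c d) enum enum_onto).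
  - intros L u [HL _] _. apply partial_iso_forth, HL.
  - intros L v HL. apply interval_back; assumption.
Qed.

Lemma finite_model_realized n m R (base : nat -> T) fs atoms :
  m <= n -> is_poset n R = true -> determines m R fs = true -> Forall (holds T le base) fs ->
  satisfies n R atoms = true ->
  exists g : nat -> T, (forall i, i < m -> g i = base i) /\ Forall (cycl_atom T le g) atoms.
Proof.
  intros Hmn Hposet Hdet Hfs Hsat.
  destruct (is_poset_sound n R Hposet) as [Hanti Htrans].
  destruct (determines_sound T le base Hpo m R fs Hdet Hfs) as [Hbase_le Hbase_inj].
  destruct (finite_poset_extends n m (fun i j => rel_of R i j = true) base)
    as (g & Hg_base & Hg_le & Hg_inj); auto using rel_of_refl.
  exists g. split; [exact Hg_base|]. exact (satisfies_sound T le g n R Hg_le Hg_inj atoms Hsat).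
Qed.

End RandomPoset.

(* Variable 0 stands for c, 1 for d, 2, 3, 4 for x, y, z, and 5 to 10 for the
   existentially quantified witnesses. *)
Definition domain_atoms : list (nat * nat * nat) := [(0, 2, 1); (0, 3, 1); (0, 4, 1)].

Definition incomp_gadget : list (nat * nat * nat) :=
  [(0, 6, 3); (0, 6, 5); (0, 7, 4); (0, 7, 5); (1, 5, 3);
   (1, 5, 4); (3, 7, 5); (3, 7, 6); (4, 6, 5); (4, 6, 7)].

Definition low_gadget : list (nat * nat * nat) :=
  [(3, 10, 4); (0, 2, 10); (0, 3, 10); (2, 3, 8); (2, 10, 8); (8, 9, 10);
   (3, 8, 9); (4, 9, 10); (2, 4, 9); (1, 9, 2); (1, 9, 3)].

Definition low_formula : list (nat * nat * nat) := domain_atoms ++ incomp_gadget ++ low_gadget.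

Definition interval_facts : list fact :=
  lt_facts 0 1 ++ lt_facts 0 2 ++ lt_facts 2 1 ++ lt_facts 0 3 ++ lt_facts 3 1 ++
  lt_facts 0 4 ++ lt_facts 4 1.

Inductive rel : Type := RLt | RGt | REq | RInc.

Definition rels : list rel := [RLt; RGt; REq; RInc].

Definition rel_facts (r : rel) (i j : nat) : list fact :=
  match r with
  | RLt => lt_facts i j
  | RGt => lt_facts j i
  | REq => [FLe i j; FLe j i]
  | RInc => incomp_facts i j
  end.

Definition low_type (rxy rxz : rel) : bool :=
  match rxy, rxz with
  | RLt, RInc | RInc, RLt => true
  | _, _ => false
  end.

Definition type_facts (rxy rxz : rel) : list fact :=
  rel_facts rxy 2 3 ++ rel_facts rxz 2 4 ++ incomp_facts 3 4 ++ interval_facts.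

Lemma incomp_gadget_refutes_comparable :
  refutes incomp_gadget (FLe 3 4 :: interval_facts) = true /\
  refutes incomp_gadget (FLe 4 3 :: interval_facts) = true.
Proof. split; vm_compute; reflexivity. Qed.

Lemma low_gadget_refutes_non_low :
  forallb (fun rxy => forallb (fun rxz =>
    low_type rxy rxz || refutes low_gadget (type_facts rxy rxz)) rels) rels = true.
Proof. vm_compute. reflexivity. Qed.

Definition witness_x_below_y : list (nat * nat) :=
  [(0, 1); (0, 2); (0, 3); (0, 4); (0, 6); (0, 7); (2, 1); (2, 3); (3, 1); (4, 1); (5, 1); (5, 3);
   (5, 4); (6, 1); (6, 3); (7, 1); (7, 4); (9, 1); (9, 2); (9, 3); (10, 1); (10, 4); (10, 8)].

Definition witness_x_below_z : list (nat * nat) :=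
  [(0, 1); (0, 2); (0, 3); (0, 4); (0, 6); (0, 7); (2, 1); (2, 4); (3, 1); (4, 1); (5, 1); (5, 3);
   (5, 4); (6, 1); (6, 3); (7, 1); (7, 4); (8, 1); (8, 2); (8, 4); (8, 9); (10, 1); (10, 4)].

Definition is_witness (R : list (nat * nat)) (rxy rxz : rel) : bool :=
  is_poset 11 R && satisfies 11 R low_formula && determines 5 R (type_facts rxy rxz).

Lemma witnesses_valid :
  is_witness witness_x_below_y RLt RInc = true /\ is_witness witness_x_below_z RInc RLt = true.
Proof. split; vm_compute; reflexivity. Qed.

Lemma low_formula_indices_below : Forall (indices_below 11) low_formula.
Proof.
  destruct witnesses_valid as [Hw _].
  apply andb_true_iff in Hw as [Hw _]. apply andb_true_iff in Hw as [_ Hsat].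
  exact (satisfies_indices_below _ _ _ Hsat).
Qed.

Section LowFormula.
Variables (T : Type) (le : T -> T -> Prop).
Hypothesis Hpo : is_partial_order T le.
Variable env : nat -> T.

Lemma interval_facts_hold :
  lt T le (env 0) (env 1) ->
  in_interval T le (env 0) (env 1) (env 2) -> in_interval T le (env 0) (env 1) (env 3) ->
  in_interval T le (env 0) (env 1) (env 4) -> Forall (holds T le env) interval_facts.
Proof.
  intros Hcd [Hx0 Hx1] [Hy0 Hy1] [Hz0 Hz1]. unfold interval_facts.
  repeat (apply Forall_app; split); apply lt_facts_hold; assumption.
Qed.

Lemma rel_facts_exist i j : exists r, Forall (holds T le env) (rel_facts r i j).
Proof.
  destruct (classic (le (env i) (env j))) as [Hij|Hij];
    destruct (classic (le (env j) (env i))) as [Hji|Hji].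
  - exists REq. repeat constructor; assumption.
  - exists RLt. apply lt_facts_hold. split; [exact Hij|intros E; apply Hji; rewrite E; apply (le_refl T le Hpo)].
  - exists RGt. apply lt_facts_hold. split; [exact Hji|intros E; apply Hij; rewrite E; apply (le_refl T le Hpo)].
  - exists RInc. apply incomp_facts_hold. split; assumption.
Qed.

Lemma type_facts_hold rxy rxz :
  Forall (holds T le env) (rel_facts rxy 2 3) -> Forall (holds T le env) (rel_facts rxz 2 4) ->
  Forall (holds T le env) (incomp_facts 3 4) -> Forall (holds T le env) interval_facts ->
  Forall (holds T le env) (type_facts rxy rxz).
Proof. intros. unfold type_facts. rewrite !Forall_app. tauto. Qed.

Lemma low_type_sound rxy rxz : low_type rxy rxz = true ->
  Forall (holds T le env) (type_facts rxy rxz) -> Low T le (env 2) (env 3) (env 4).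
Proof.
  unfold type_facts, interval_facts, Low, incomp2, incomp, lt.
  destruct rxy, rxz; try discriminate; intros _ Hfacts; simpl in Hfacts;
    repeat rewrite Forall_cons_iff in Hfacts; simpl in Hfacts; tauto.
Qed.

Lemma low_formula_in_interval : Forall (cycl_atom T le env) low_formula ->
  lt T le (env 0) (env 1) ->
  in_interval T le (env 0) (env 1) (env 2) /\ in_interval T le (env 0) (env 1) (env 3) /\
  in_interval T le (env 0) (env 1) (env 4).
Proof.
  intros Hatoms Hcd. apply Forall_app in Hatoms as [Hdom _].
  unfold domain_atoms in Hdom. repeat rewrite Forall_cons_iff in Hdom. simpl in Hdom.
  rewrite !(Cycl_between T le Hpo) in Hdom by exact Hcd. tauto.
Qed.

Lemma low_formula_sound : Forall (cycl_atom T le env) low_formula ->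
  lt T le (env 0) (env 1) -> Low T le (env 2) (env 3) (env 4).
Proof.
  intros Hatoms Hcd.
  destruct (low_formula_in_interval Hatoms Hcd) as (Hx & Hy & Hz).
  pose proof (interval_facts_hold Hcd Hx Hy Hz) as Hinterval.
  unfold low_formula in Hatoms.
  apply Forall_app in Hatoms as [_ Hatoms]. apply Forall_app in Hatoms as [Hinc Hlow].
  assert (Hyz : Forall (holds T le env) (incomp_facts 3 4)).
  { destruct incomp_gadget_refutes_comparable as [Hyz Hzy].
    apply incomp_facts_hold. split; intros H;
      [apply (refutes_sound T le env Hpo _ _ Hyz)|apply (refutes_sound T le env Hpo _ _ Hzy)];
      solve [assumption|constructor; assumption]. }
  destruct (rel_facts_exist 2 3) as [rxy Hxy]. destruct (rel_facts_exist 2 4) as [rxz Hxz].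
  pose proof (type_facts_hold rxy rxz Hxy Hxz Hyz Hinterval) as Htype.
  pose proof low_gadget_refutes_non_low as Hcheck. rewrite forallb_forall in Hcheck.
  assert (Hrxy : In rxy rels) by (destruct rxy; simpl; tauto).
  assert (Hrxz : In rxz rels) by (destruct rxz; simpl; tauto).
  specialize (Hcheck rxy Hrxy). rewrite forallb_forall in Hcheck.
  specialize (Hcheck rxz Hrxz). apply orb_true_iff in Hcheck as [Hlow_type|Hrefutes].
  - exact (low_type_sound rxy rxz Hlow_type Htype).
  - exfalso. exact (refutes_sound T le env Hpo _ _ Hrefutes Htype Hlow).
Qed.

End LowFormula.

Definition term_of (i : nat) : term :=
  match i with
  | 0 => TConstC
  | 1 => TConstD
  | S (S k) => TVar k
  end.

Definition cycl_syntax (t : nat * nat * nat) : atom :=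
  let '(i, j, k) := t in ACycl (term_of i) (term_of j) (term_of k).

Definition eq_syntax (p : nat * nat) : atom := AEq (term_of (fst p)) (term_of (snd p)).

Lemma Forall_iff_in {A : Type} (P Q : A -> Prop) (l : list A) :
  (forall x, In x l -> (P x <-> Q x)) -> (Forall P l <-> Forall Q l).
Proof.
  intros HPQ. rewrite !Forall_forall.
  split; intros H x Hx; apply (HPQ x Hx), H, Hx.
Qed.

Section Syntax.
Variables (T : Type) (le : T -> T -> Prop) (c d : T).

Definition env_of (L : list T) (i : nat) : T := nth i (c :: d :: L) c.

Lemma eval_term_of L i : i < 2 + length L ->
  eval_term T c d L (term_of i) = Some (env_of L i).
Proof.
  intros Hi. unfold env_of. destruct i as [|[|k]]; simpl; [reflexivity|reflexivity|].
  apply nth_error_nth'. simpl in Hi. lia.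
Qed.

Lemma sat_cycl_syntax L t : indices_below (2 + length L) t ->
  (sat_atom T le c d L (cycl_syntax t) <-> cycl_atom T le (env_of L) t).
Proof.
  destruct t as [[i j] k]. intros (Hi & Hj & Hk). simpl.
  rewrite !eval_term_of by assumption. split.
  - intros (a & b & e & [= <-] & [= <-] & [= <-] & H). exact H.
  - intros H. exists (env_of L i), (env_of L j), (env_of L k). auto.
Qed.

Lemma sat_eq_syntax L p : fst p < 2 + length L -> snd p < 2 + length L ->
  (sat_atom T le c d L (eq_syntax p) <-> env_of L (fst p) = env_of L (snd p)).
Proof.
  intros Hi Hj. simpl. rewrite !eval_term_of by assumption. split.
  - intros (a & b & [= <-] & [= <-] & H). exact H.
  - intros H. exists (env_of L (fst p)), (env_of L (snd p)). auto.
Qed.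

Lemma pp_definable_of_formula k m atoms eqs (R : list T -> Prop) :
  Forall (indices_below (2 + k + m)) atoms ->
  Forall (fun p => fst p < 2 + k + m /\ snd p < 2 + k + m) eqs ->
  (forall xs, length xs = k ->
     (R xs <-> exists ws, length ws = m /\
        Forall (cycl_atom T le (env_of (xs ++ ws))) atoms /\
        Forall (fun p => env_of (xs ++ ws) (fst p) = env_of (xs ++ ws) (snd p)) eqs)) ->
  pp_definable T le c d k R.
Proof.
  intros Hatoms Heqs HR. exists m, (map cycl_syntax atoms ++ map eq_syntax eqs).
  intros xs Hxs. rewrite HR by exact Hxs.
  assert (Hequiv : forall ws, length ws = m ->
    (Forall (sat_atom T le c d (xs ++ ws)) (map cycl_syntax atoms ++ map eq_syntax eqs) <->
     Forall (cycl_atom T le (env_of (xs ++ ws))) atoms /\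
     Forall (fun p => env_of (xs ++ ws) (fst p) = env_of (xs ++ ws) (snd p)) eqs)).
  { intros ws Hws. assert (Hlen : length (xs ++ ws) = k + m) by (rewrite length_app; lia).
    rewrite Forall_app, !Forall_map.
    rewrite (Forall_iff_in (fun t => sat_atom T le c d (xs ++ ws) (cycl_syntax t))
                           (cycl_atom T le (env_of (xs ++ ws))) atoms),
            (Forall_iff_in (fun p => sat_atom T le c d (xs ++ ws) (eq_syntax p))
                           (fun p => env_of (xs ++ ws) (fst p) = env_of (xs ++ ws) (snd p)) eqs);
      [reflexivity| |].
    - intros p Hp. apply (proj1 (Forall_forall _ _) Heqs) in Hp as [Hi Hj].
      apply sat_eq_syntax; rewrite Hlen; assumption.
    - intros t Ht. apply sat_cycl_syntax. rewrite Hlen.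
      exact (proj1 (Forall_forall _ _) Hatoms t Ht). }
  split; intros (ws & Hws & H); exists ws; split; try exact Hws; apply (Hequiv ws Hws), H.
Qed.

End Syntax.

Arguments env_of {T} c d L i.

Section Interpretation.
Variables (T : Type) (le : T -> T -> Prop).
Hypothesis HP : random_poset T le.
Variables c d : T.
Hypothesis Hcd : lt T le c d.

Let Hpo : is_partial_order T le := proj1 HP.

Lemma low_formula_realized R rxy rxz x y z :
  is_witness R rxy rxz = true ->
  Forall (holds T le (env_of c d [x; y; z])) (type_facts rxy rxz) ->
  exists ws, length ws = 6 /\
    Forall (cycl_atom T le (env_of c d ([x; y; z] ++ ws))) low_formula.
Proof.
  intros Hw Hfacts. unfold is_witness in Hw. rewrite !andb_true_iff in Hw.
  destruct Hw as ((Hposet & Hsat) & Hdet).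
  destruct (finite_model_realized T le HP 11 5 R _ _ low_formula
              ltac:(lia) Hposet Hdet Hfacts Hsat) as (g & Hg_base & Hg_atoms).
  exists (map g (seq 5 6)). split; [reflexivity|].
  apply (cycl_atoms_ext T le _ 11 g); [|exact low_formula_indices_below|exact Hg_atoms].
  intros i Hi. do 5 (destruct i as [|i]; [apply Hg_base; lia|]).
  do 6 (destruct i as [|i]; [reflexivity|]). lia.
Qed.

Lemma low_formula_complete x y z :
  in_interval T le c d x -> in_interval T le c d y -> in_interval T le c d z ->
  Low T le x y z ->
  exists ws, length ws = 6 /\
    Forall (cycl_atom T le (env_of c d ([x; y; z] ++ ws))) low_formula.
Proof.
  intros Hx Hy Hz Hlow.
  pose proof (interval_facts_hold T le (env_of c d [x; y; z]) Hcd Hx Hy Hz) as Hinterval.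
  destruct Hlow as [(Hxy & [Hzx1 Hzx2] & [Hzy1 Hzy2])|(Hxz & [Hyx1 Hyx2] & [Hyz1 Hyz2])];
    [apply (low_formula_realized witness_x_below_y RLt RInc); [apply witnesses_valid|]
    |apply (low_formula_realized witness_x_below_z RInc RLt); [apply witnesses_valid|]];
    apply type_facts_hold; try exact Hinterval;
    solve [apply lt_facts_hold; assumption | apply incomp_facts_hold; split; assumption].
Qed.

Variable f : T -> T.
Hypothesis f_iso : forall x y, in_interval T le c d x -> in_interval T le c d y ->
  (x = y <-> f x = f y) /\ (le x y <-> le (f x) (f y)).

Definition code_domain (xs : list T) : Prop := Cycl T le c (hd c xs) d.

Definition decode (xs : list T) : T := f (hd c xs).

Lemma code_domain_pp_definable : pp_definable T le c d 1 code_domain.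
Proof.
  apply (pp_definable_of_formula T le c d 1 0 [(0, 2, 1)] []);
    [repeat constructor|constructor|].
  intros [|x [|]] Hlen; try discriminate. split.
  - intros H. exists []. repeat split; constructor; [exact H|constructor].
  - intros ([|] & Hws & Hatoms & _); [|discriminate].
    apply Forall_cons_iff in Hatoms as [H _]. exact H.
Qed.

Lemma code_eq_pp_definable : pp_definable T le c d 2 (fun zs =>
  code_domain (firstn 1 zs) /\ code_domain (skipn 1 zs) /\ decode (firstn 1 zs) = decode (skipn 1 zs)).
Proof.
  apply (pp_definable_of_formula T le c d 2 0 [(0, 2, 1); (0, 3, 1)] [(2, 3)]);
    [repeat constructor|repeat constructor|].
  intros [|x [|y [|]]] Hlen; try discriminate. unfold code_domain, decode. simpl. split.
  - intros (Hx & Hy & E).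
    assert (Exy : x = y)
      by (apply (f_iso x y); [apply (Cycl_between T le Hpo c d _ Hcd); assumption..|exact E]).
    subst y. exists [].
    split; [reflexivity|split; repeat apply Forall_cons; try apply Forall_nil; assumption || reflexivity].
  - intros ([|] & Hws & Hatoms & Heqs); [|discriminate].
    apply Forall_cons_iff in Hatoms as [Hx Hatoms]. apply Forall_cons_iff in Hatoms as [Hy _].
    apply Forall_cons_iff in Heqs as [Exy _]. cbn in Exy. subst y.
    split; [exact Hx|split; [exact Hy|reflexivity]].
Qed.

Lemma code_low_pp_definable : pp_definable T le c d 3 (fun zs =>
  code_domain (firstn 1 zs) /\ code_domain (firstn 1 (skipn 1 zs)) /\ code_domain (skipn 2 zs) /\
  Low T le (decode (firstn 1 zs)) (decode (firstn 1 (skipn 1 zs))) (decode (skipn 2 zs))).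
Proof.
  apply (pp_definable_of_formula T le c d 3 6 low_formula []);
    [exact low_formula_indices_below|constructor|].
  intros [|x [|y [|z [|]]]] Hlen; try discriminate. unfold code_domain, decode. simpl.
  rewrite !(Cycl_between T le Hpo c d) by exact Hcd.
  assert (Htransfer : in_interval T le c d x -> in_interval T le c d y ->
            in_interval T le c d z -> (Low T le x y z <-> Low T le (f x) (f y) (f z)))
    by apply (Low_transfer T le (in_interval T le c d) f x y z f_iso).
  split.
  - intros (Hx & Hy & Hz & Hlow).
    destruct (low_formula_complete x y z Hx Hy Hz) as (ws & Hws & Hatoms);
      [apply (Htransfer Hx Hy Hz), Hlow|].
    exists ws. split; [exact Hws|split; [exact Hatoms|constructor]].
  - intros (ws & _ & Hatoms & _).
    destruct (low_formula_in_interval T le Hpo _ Hatoms Hcd) as (Hx & Hy & Hz).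
    split; [exact Hx|split; [exact Hy|split; [exact Hz|]]].
    apply (Htransfer Hx Hy Hz), (low_formula_sound T le Hpo _ Hatoms Hcd).
Qed.

End Interpretation.

Theorem lemma62 (T : Type) (le : T -> T -> Prop) (HP : @random_poset T le)
  (c d : T) (Hcd : @lt T le c d) :
  @pp_interprets_Low T le c d.
Proof.
  destruct (interval_iso T le HP c d Hcd) as (f & f_iso & f_onto).
  exists 1. split; [lia|].
  exists (code_domain T le c d), (decode T c f).
  split; [apply code_domain_pp_definable|].
  split; [|split; [apply code_eq_pp_definable|apply code_low_pp_definable]; assumption].
  intros y. destruct (f_onto y) as (x & Hx & <-).
  exists [x]. split; [reflexivity|split; [|reflexivity]].
  apply (Cycl_between T le (proj1 HP) c d _ Hcd), Hx.
Qed.
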